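(* Let $V$ be a vertex algebra of countable dimension over $\mathbb{C}$ and let $W$ be an irreducible $L_r(V)$-module. Then $W$ is isomorphic as an $L_r(V)$-module to $U_{\mathbf{a}}$ for some irreducible $V$-module $U$ and some $\mathbf{a}\in(\mathbb{C}^\times)^r$.
   Context: Let $L_r=\mathbb{C}[t_1^{\pm1},\dots,t_r^{\pm1}]$, with $\mathbf{t}^{\mathbf{m}}=t_1^{m_1}\cdots t_r^{m_r}$; as a commutative associative algebra with identity it is a vertex algebra with $Y(a,x)b=ab$ and vacuum $1$. For a vertex algebra $V$, $L_r(V)=V\otimes L_r$ denotes the tensor product vertex algebra. For a $V$-module $(U,Y_U)$ and $\mathbf{a}=(a_1,\dots,a_r)\in(\mathbb{C}^\times)^r$, $U_{\mathbf{a}}$ denotes the $L_r(V)$-module with underlying space $U$ and vertex operators $\widehat{Y}(v\otimes\mathbf{t}^{\mathbf{m}},x)=\mathbf{a}^{\mathbf{m}}Y_U(v,x)$ for $v\in V,\mathbf{m}\in\mathbb{Z}^r$, where $\mathbf{a}^{\mathbf{m}}=a_1^{m_1}\cdots a_r^{m_r}$. *)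

From HB Require Import structures.
From mathcomp Require Import all_boot all_order all_algebra.
From mathcomp Require Import finmap.
From mathcomp Require Import complex.
From mathcomp Require Import Rstruct.
From mathcomp.multinomials Require Import monalg.
Set Implicit Arguments. Unset Strict Implicit. Unset Printing Implicit Defensive.
Import Order.TTheory GRing.Theory Num.Theory.
Local Open Scope ring_scope.

Definition CC : numClosedFieldType := complex Rdefinitions.R.

(** Vertex operators are encoded by their modes:  Y(u,x)w = sum_n u_n w x^{-n-1},
    written  [mode u n w].  The Jacobi identity is stated in its equivalent
    component form (Borcherds identity); all sums over i >= 0 are finite by
    truncation, so we require equality of partial sums for all large bounds. *)
Section VA.
Variable F : fieldType.

Definition binz (m : int) (i : nat) : F :=
  (\prod_(j < i) ((m - (j : nat)%:Z)%:~R : F)) / (i`!)%:R.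

Record VAdata := { va_space : lmodType F;
                   va_mode : va_space -> int -> va_space -> va_space;
                   va_vac : va_space }.
Arguments va_mode : clear implicits.
Arguments va_vac : clear implicits.

Definition is_module (A : VAdata) (W : lmodType F)
    (YW : va_space A -> int -> W -> W) : Prop :=
  [/\ (forall (c : F) u v n w, YW (c *: u + v) n w = c *: YW u n w + YW v n w),
      (forall u n (c : F) w w', YW u n (c *: w + w') = c *: YW u n w + YW u n w'),
      (forall u w, exists N : int, forall n, N <= n -> YW u n w = 0),
      (forall n w, YW (va_vac A) n w = if n == -1 then w else 0) &
      (forall u v w (m n l : int), exists N : nat, forall K : nat, (N <= K)%N ->
         \sum_(i < K) binz m i *: YW (va_mode A u (l + (i : nat)%:Z) v)
                                    (m + n - (i : nat)%:Z) w
         = \sum_(i < K) ((-1) ^+ i * binz l i) *: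
              (YW u (m + l - (i : nat)%:Z) (YW v (n + (i : nat)%:Z) w)
               - ((-1) ^ l) *: YW v (n + l - (i : nat)%:Z) (YW u (m + (i : nat)%:Z) w)))].

Definition is_vertex_algebra (A : VAdata) : Prop :=
  is_module (va_mode A) /\
  (forall u, va_mode A u (-1) (va_vac A) = u /\
             forall n : int, 0 <= n -> va_mode A u n (va_vac A) = 0).

Definition is_submodule (A : VAdata) (W : lmodType F)
    (YW : va_space A -> int -> W -> W) (S : W -> Prop) : Prop :=
  [/\ S 0, (forall (c : F) x y, S x -> S y -> S (c *: x + y)) &
      (forall u n w, S w -> S (YW u n w))].

Definition is_irreducible (A : VAdata) (W : lmodType F)
    (YW : va_space A -> int -> W -> W) : Prop :=
  is_module YW /\ (exists w : W, w <> 0) /\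
  forall S : W -> Prop, is_submodule YW S ->
    (forall w, S w -> w = 0) \/ (forall w, S w).

Definition countable_dim (V : lmodType F) : Prop :=
  exists e : nat -> V, forall v : V,
    exists (n : nat) (c : nat -> F), v = \sum_(i < n) c i *: e i.

Definition module_iso (A : VAdata) (W U : lmodType F)
    (YW : va_space A -> int -> W -> W) (YU : va_space A -> int -> U -> U) : Prop :=
  exists phi : W -> U,
    [/\ bijective phi,
        (forall (c : F) x y, phi (c *: x + y) = c *: phi x + phi y) &
        (forall u n w, phi (YW u n w) = YU u n (phi w))].

(** * The tensor product  V (x) L_r,  L_r = F[t_1^{+-1},...,t_r^{+-1}].
    It is modelled as finitely supported functions Z^r -> V (the element
    sum_m v_m (x) t^m), i.e. the free module {malg V[Z^r]}. *)
Section Tensor.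
Variables (M : choiceType) (V : lmodType F).

Definition tensL := malg M V.
HB.instance Definition _ := GRing.Zmodule.on tensL.

Definition tscale (c : F) (g : tensL) : tensL :=
  \sum_(k <- msupp g) << c *: g@_k *g k >>.

Lemma tscaleE c g k : (tscale c g)@_k = c *: g@_k.
Proof.
rewrite /tscale raddf_sum /=.
case: (msuppP g k) => Hk.
  rewrite (bigD1_seq k) //= ?msupp_uniq ?fset_uniq //= mcoeffUU big1 ?addr0 //.
  by move=> i /negPf ik; rewrite mcoeffU ik.
rewrite big1 ?scaler0 // => i _; rewrite mcoeffU.
by case: eqP => // ik; rewrite -ik in Hk *; rewrite mcoeff_outdom ?scaler0.
Qed.

Lemma tscaleA c1 c2 g : tscale c1 (tscale c2 g) = tscale (c1 * c2) g.
Proof. by apply/malgP=> x; rewrite !tscaleE scalerA. Qed.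
Lemma tscale1 g : tscale 1 g = g.
Proof. by apply/malgP=> k; rewrite !tscaleE scale1r. Qed.
Lemma tscaleDr c g1 g2 : tscale c (g1 + g2) = tscale c g1 + tscale c g2.
Proof. by apply/malgP=> k; rewrite !(mcoeffD, tscaleE) scalerDr. Qed.
Lemma tscaleDl g c1 c2 : tscale (c1 + c2) g = tscale c1 g + tscale c2 g.
Proof. by apply/malgP=> x; rewrite !(mcoeffD, tscaleE) scalerDl. Qed.

HB.instance Definition _ := GRing.Zmodule_isLmodule.Build F tensL
  tscaleA tscale1 tscaleDr tscaleDl.
End Tensor.

(** The tensor product vertex algebra  L_r(V) = V (x) L_r, where L_r carries
    Y(a,x)b = ab, vacuum 1:  (v (x) t^m)_n (w (x) t^k) = v_n w (x) t^(m+k). *)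
Definition Lr_mode (r : nat) (A : VAdata) (f : tensL 'rV[int]_r (va_space A))
    (n : int) (g : tensL 'rV[int]_r (va_space A)) : tensL 'rV[int]_r (va_space A) :=
  \sum_(k <- msupp f) \sum_(k' <- msupp g)
     << va_mode A (f@_k) n (g@_k') *g (k + k') >>.

Definition LrV (r : nat) (A : VAdata) : VAdata :=
  {| va_space := tensL 'rV[int]_r (va_space A);
     va_mode := @Lr_mode r A;
     va_vac := << va_vac A *g 0 >> |}.

Definition monoz (r : nat) (a : 'rV[F]_r) (m : 'rV[int]_r) : F :=
  \prod_(i < r) (a 0 i) ^ (m 0 i).

Definition Ua_mode (r : nat) (A : VAdata) (U : lmodType F)
    (YU : va_space A -> int -> U -> U) (a : 'rV[F]_r)
    (f : va_space (LrV r A)) (n : int) (u : U) : U :=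
  \sum_(k <- msupp (f : tensL _ _)) monoz a k *: YU (f@_k) n u.

End VA.

From HB Require Import structures.
From mathcomp Require Import all_boot all_order all_algebra.
From mathcomp Require Import finmap complex.
From mathcomp.multinomials Require Import monalg.
From mathcomp Require Import boolp classical_sets functions cardinality.
From mathcomp Require Import Rstruct Rstruct_topology zify ring.
From Stdlib Require Import Reals.Runcountable.
Set Implicit Arguments. Unset Strict Implicit. Unset Printing Implicit Defensive.
Import Order.TTheory GRing.Theory Num.Theory.
Local Open Scope ring_scope.

(* For m in Z^r let T_m be the action of (1 (x) t^m)_(-1) on W.  Since
   (1 (x) t^m)_(-2) 1 = 0 and (1 (x) t^m)_i annihilates L_r(V) for i >= 0, the
   Borcherds identity shows that the other modes of 1 (x) t^m vanish on W, that
   T_m commutes with the whole action, and that ((1 (x) t^m)_(-1) f)_n acts as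
   T_m f_n.  As W has countable dimension and C is uncountable, Dixmier's form
   of Schur's lemma makes every T_m a scalar; m |-> T_m is then a character of
   Z^r, i.e. m |-> a^m.  Hence (v (x) t^m)_n = a^m (v (x) 1)_n on W, so W with
   the action of V (x) 1 is an irreducible V-module U and W = U_a. *)

Lemma R_not_countable : ~ countable [set: Rdefinitions.R]%classic.
Proof.
move=> Rc.
have natR : ([set: nat] #<= [set: Rdefinitions.R])%card.
  apply/pcard_injP; exists (fun n : nat => n%:R : Rdefinitions.R).
  by move=> x y _ _ /eqP; rewrite eqr_nat => /eqP.
have /card_set_bijP[u] : ([set: nat]%classic #= [set: Rdefinitions.R]%classic)%card.
  by rewrite card_eq_le natR; exact: Rc.
rewrite setTT_bijective => -[v uK vK].
by apply: (R_uncountable u); exists v.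
Qed.

Lemma CC_not_countable : ~ countable [set: CC]%classic.
Proof.
move=> /countable_injP[f finj]; apply: R_not_countable.
apply/countable_injP; exists (fun x => f (real_complex _ x)) => x y _ _.
by move/finj; rewrite !inE => /(_ I I) [].
Qed.

Lemma uncountable_fiber (T : choiceType) (N : T -> nat) : ~ countable [set: T]%classic ->
  exists (M : nat) (s : seq T), [/\ uniq s, (M < size s)%N & {in s, forall c, N c = M}].
Proof.
move=> Tunc; apply: contrapT => noFiber; apply: Tunc.
have fiber_finite M : finite_set [set c | N c = M].
  apply: contrapT => /(infinite_set_fset M.+1)[B BM sizeB]; apply: noFiber.
  by exists M, (finmap.enum_fset B); split; [exact: finmap.fset_uniq | | move=> c /BM].
rewrite (_ : [set: T]%classic = \bigcup_(M in [set: nat]) [set c | N c = M])%classic.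
  by apply: bigcup_countable => // M _; exact: finite_set_countable.
by apply/seteqP; split=> c // _; exists (N c).
Qed.

Section LinearFor.
Variables (R : pzRingType) (U V : lmodType R) (f : U -> V).
Hypothesis fL : linear f.
Let fl : {linear U -> V} := HB.pack f (GRing.isLinear.Build _ _ _ _ f fL).

Lemma lin0 : f 0 = 0. Proof. exact: linear0 fl. Qed.
Lemma linB x y : f (x - y) = f x - f y. Proof. exact: linearB fl x y. Qed.
Lemma linZ a x : f (a *: x) = a *: f x. Proof. exact: linearZ_LR fl a x. Qed.
Lemma lin_sum (I : Type) (r : seq I) (P : pred I) (G : I -> U) :
  f (\sum_(i <- r | P i) G i) = \sum_(i <- r | P i) f (G i).
Proof. exact: (linear_sum fl). Qed.
End LinearFor.

Section CountableSpan.
Variables (F : fieldType) (W : lmodType F) (e : nat -> W).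

Definition in_cspan (w : W) : Prop :=
  exists (n : nat) (c : nat -> F), w = \sum_(i < n) c i *: e i.

Lemma in_cspan_gen i : in_cspan (e i).
Proof.
exists i.+1, (fun j => (j == i)%:R); rewrite big_ord_recr /= eqxx scale1r.
by rewrite big1 ?add0r // => j _; rewrite (ltn_eqF (ltn_ord j)) scale0r.
Qed.

Lemma in_cspan0 : in_cspan 0.
Proof. by exists 0%N, (fun=> 0); rewrite big_ord0. Qed.

Lemma in_cspan_lin (a : F) x y : in_cspan x -> in_cspan y -> in_cspan (a *: x + y).
Proof.
have widen n1 n (c : nat -> F) : (n1 <= n)%N ->
    \sum_(i < n1) c i *: e i = \sum_(i < n) (if (i < n1)%N then c i else 0) *: e i.
  move=> le_n1n; rewrite (big_ord_widen _ (fun i => c i *: e i) le_n1n) big_mkcond.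
  by apply: eq_bigr => i _; case: ifP; rewrite ?scale0r.
move=> [n1 [c1 ->]] [n2 [c2 ->]]; set n := maxn n1 n2.
exists n, (fun i => a * (if (i < n1)%N then c1 i else 0) + if (i < n2)%N then c2 i else 0).
rewrite (widen n1 n) ?leq_maxl // (widen n2 n) ?leq_maxr // scaler_sumr -big_split.
by apply: eq_bigr => i _; rewrite scalerDl scalerA.
Qed.

Lemma in_cspanZ (a : F) x : in_cspan x -> in_cspan (a *: x).
Proof. by move=> Sx; rewrite -[a *: x]addr0; apply: in_cspan_lin Sx in_cspan0. Qed.

Lemma in_cspan_sum (I : Type) (r : seq I) (P : pred I) (G : I -> W) :
  (forall i, in_cspan (G i)) -> in_cspan (\sum_(i <- r | P i) G i).
Proof.
move=> SG; apply: big_ind => // [|x y Sx Sy]; first exact: in_cspan0.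
by rewrite -[x]scale1r; apply: in_cspan_lin.
Qed.

End CountableSpan.

Lemma span_dependent (F : fieldType) (W : lmodType F) (M n : nat) (e : nat -> W)
    (a : 'I_n -> nat -> F) (v : 'I_n -> W) : (M < n)%N ->
  (forall j, v j = \sum_(i < M) a j i *: e i) ->
  exists2 l : 'I_n -> F, exists j, l j != 0 & \sum_j l j *: v j = 0.
Proof.
move=> ltMn def_v; pose A : 'M[F]_(n, M) := \matrix_(j, i) a j i.
have : kermx A != 0.
  rewrite -mxrank_eq0 mxrank_ker subn_eq0 -ltnNge.
  exact: leq_ltn_trans (rank_leq_col A) ltMn.
case/matrix0Pn => k [j0 Kkj0].
exists (fun j => kermx A k j); first by exists j0.
have kerA (i : 'I_M) : \sum_j kermx A k j * a j i = 0.
  transitivity ((kermx A *m A) k i); last by rewrite mulmx_ker mxE.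
  by rewrite mxE; apply: eq_bigr => j _; rewrite [A j i]mxE.
under eq_bigr => j _ do rewrite def_v scaler_sumr.
rewrite exchange_big big1 // => i _.
by rewrite -[RHS](scale0r (e i)) -(kerA i) scaler_suml; apply: eq_bigr => j _; rewrite scalerA.
Qed.

Section OperatorPolynomial.
Variables (F : fieldType) (W : lmodType F) (T : W -> W).
Hypothesis Tlin : linear T.

Definition op_horner (p : {poly F}) (w : W) : W := \sum_(i < size p) p`_i *: iter i T w.

Lemma op_hornerE n (p : {poly F}) (w : W) : (size p <= n)%N ->
  op_horner p w = \sum_(i < n) p`_i *: iter i T w.
Proof.
move=> le_pn; rewrite /op_horner (big_ord_widen _ (fun i => p`_i *: iter i T w) le_pn).
rewrite big_mkcond; apply: eq_bigr => i _.
by case: ltnP => // le_p_i; rewrite nth_default ?scale0r.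
Qed.

Lemma op_horner0 (w : W) : op_horner 0 w = 0.
Proof. by rewrite /op_horner size_poly0 big_ord0. Qed.

Lemma op_hornerC c (w : W) : op_horner c%:P w = c *: w.
Proof. by rewrite (@op_hornerE 1) ?size_polyC ?leq_b1 // big_ord1 coefC. Qed.

Lemma op_hornerD (p q : {poly F}) (w : W) : op_horner (p + q) w = op_horner p w + op_horner q w.
Proof.
set n := maxn (size p) (size q).
rewrite !(@op_hornerE n) ?leq_maxl ?leq_maxr ?size_polyD // -big_split.
by apply: eq_bigr => i _; rewrite coefD scalerDl.
Qed.

Lemma op_hornerZ c (p : {poly F}) (w : W) : op_horner (c *: p) w = c *: op_horner p w.
Proof.
rewrite (@op_hornerE (size p)) ?size_scale_leq // scaler_sumr.
by apply: eq_bigr => i _; rewrite coefZ scalerA.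
Qed.

Lemma iter_linear i : linear (iter i T).
Proof. by elim: i => [|i IHi] c x y //=; rewrite IHi Tlin. Qed.

Lemma op_horner_linear (p : {poly F}) : linear (op_horner p).
Proof.
move=> c x y; rewrite /op_horner scaler_sumr -big_split; apply: eq_bigr => i _.
by rewrite iter_linear scalerDr !scalerA mulrC.
Qed.

Lemma op_hornerMX (p : {poly F}) (w : W) : op_horner (p * 'X) w = op_horner p (T w).
Proof.
have [->|p_neq0] := eqVneq p 0; first by rewrite mul0r !op_horner0.
rewrite /op_horner size_mulX // big_ord_recl coefMX /= scale0r add0r.
by apply: eq_bigr => i _; rewrite coefMX /= -iterSr.
Qed.

Lemma op_hornerMXsubC (p : {poly F}) c (w : W) :
  op_horner (p * ('X - c%:P)) w = op_horner p (T w - c *: w).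
Proof.
rewrite mulrBr [p * c%:P]mulrC mul_polyC -scaleNr op_hornerD op_hornerZ op_hornerMX.
by rewrite (linB (op_horner_linear p)) (linZ (op_horner_linear p)) scaleNr.
Qed.

End OperatorPolynomial.

Lemma op_horner_neq0 (F : closedFieldType) (W : lmodType F) (T : W -> W) :
  linear T -> (forall c, injective (fun w => T w - c *: w)) ->
  forall p w, p != 0 -> w != 0 -> op_horner T p w != 0.
Proof.
move=> Tlin Tinj p; have [n] := ubnP (size p); elim: n p => // n IHn p lt_p_n w p0 w0.
have [p1|p_neq1] := eqVneq (size p) 1.
  have [c def_p] : exists c, p = c%:P by exists p`_0; apply: size1_polyC; rewrite p1.
  move: p0; rewrite def_p op_hornerC polyC_eq0 => c0.
  by rewrite scaler_eq0 negb_or c0.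
have [x /factor_theorem[q def_p]] := closed_rootP p p_neq1.
have q0 : q != 0 by apply: contraNneq p0 => q0; rewrite def_p q0 mul0r.
rewrite def_p (op_hornerMXsubC Tlin); apply: IHn => //.
  by move: lt_p_n; rewrite def_p size_Mmonic ?monicXsubC // size_XsubC addn2.
apply: contraNneq w0 => Tw0; apply/eqP/(Tinj x).
by rewrite /= Tw0 (lin0 Tlin) scaler0 subr0.
Qed.

Lemma lagrange_sum_neq0 (F : fieldType) (s : seq F) (l : 'I_(size s) -> F) :
  uniq s -> (exists j, l j != 0) ->
  \sum_j l j *: \prod_(k | k != j) ('X - (s`_k)%:P) != 0.
Proof.
move=> s_uniq [j0 lj0]; apply/negP => /eqP/(congr1 (horner^~ s`_j0)).
rewrite horner0 horner_sum (bigD1 j0) //= [X in _ + X]big1 ?addr0 => [|j jj0]; last first.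
  rewrite hornerZ horner_prod (bigD1 j0) 1?eq_sym //= hornerXsubC.
  by rewrite subrr mul0r mulr0.
rewrite hornerZ horner_prod => /eqP; rewrite mulf_eq0 (negbTE lj0) /=.
apply/negP; rewrite prodf_seq_neq0; apply/allP => k _; apply/implyP => kj0.
by rewrite hornerXsubC subr_eq0 nth_uniq // eq_sym.
Qed.

Lemma dixmier (F : closedFieldType) (W : lmodType F) (T : W -> W) :
  linear T -> ~ countable [set: F]%classic -> countable_dim W ->
  (forall c, (forall w, T w = c *: w) \/ bijective (fun w => T w - c *: w)) ->
  exists c, forall w, T w = c *: w.
Proof.
move=> Tlin Func [e e_span] dichotomy.
have [[w0 w0_neq0]|W0] := pselect (exists w0 : W, w0 != 0); last first.
  exists 0 => w; have -> : w = 0 by apply: contrapT => wn0; apply: W0; exists w; apply/eqP.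
  by rewrite (lin0 Tlin) scaler0.
apply: contrapT => not_scalar.
have shifted_bij c : bijective (fun w => T w - c *: w).
  by case: (dichotomy c) => // T_scalar; case: not_scalar; exists c.
(* The vectors (T - c)^-1 w0, c in F, are too many for a space of countable
   dimension; multiplying a linear relation among them by prod_k (T - c_k)
   yields a nonzero polynomial p with p(T) w0 = 0, although every T - c is
   injective. *)
have /choice[x def_x] c : exists x, T x - c *: x = w0.
  by have [g _ gK] := shifted_bij c; exists (g w0); rewrite gK.
have /choice[nc def_nc] c : exists nc : nat * (nat -> F),
    x c = \sum_(i < nc.1) nc.2 i *: e i.
  by have [n [a ->]] := e_span (x c); exists (n, a).
have [M [s [s_uniq lt_M_s s_fiber]]] := uncountable_fiber (fun c => (nc c).1) Func.
have [l l_neq0 l_rel] : exists2 l : 'I_(size s) -> F, exists j, l j != 0 &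
    \sum_j l j *: x s`_j = 0.
  apply: (span_dependent (a := fun j => (nc s`_j).2)) lt_M_s _ => j.
  by rewrite def_nc s_fiber // mem_nth.
pose Q j := \prod_(k < size s | k != j) ('X - (s`_k)%:P).
pose P := \prod_(k < size s) ('X - (s`_k)%:P).
have P_x (j : 'I_(size s)) : op_horner T P (x s`_j) = op_horner T (Q j) w0.
  by rewrite /P (bigD1 j) //= mulrC (op_hornerMXsubC Tlin) def_x.
have P_lin := op_horner_linear Tlin P.
have /eqP := congr1 (op_horner T P) l_rel; apply/negP.
rewrite (lin0 P_lin) (lin_sum P_lin).
under eq_bigr => j _ do rewrite (linZ P_lin) P_x -op_hornerZ.
rewrite -(big_morph _ (fun p q => op_hornerD T p q w0) (op_horner0 T w0)).
apply: (op_horner_neq0 Tlin _ (lagrange_sum_neq0 s_uniq l_neq0) w0_neq0).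
by move=> c; apply: bij_inj.
Qed.

Lemma binz_0 (F : fieldType) (m : int) : binz F m 0 = 1.
Proof. by rewrite /binz big_ord0 fact0 divr1. Qed.

Lemma binz0S (F : fieldType) (i : nat) : binz F 0 i.+1 = 0.
Proof. by rewrite /binz big_ord_recl /= subrr !mul0r. Qed.

Lemma signed_binzN2 (F : numFieldType) (i : nat) : (-1) ^+ i * binz F (-2) i = i.+1%:R.
Proof.
have prodN2 : \prod_(j < i) ((-2 - (j : nat)%:Z)%:~R : F) = (-1) ^+ i * (i.+1)`!%:R.
  elim: i => [|i IHi]; first by rewrite big_ord0 expr0 mul1r.
  rewrite big_ord_recr /= IHi exprS (factS i.+1) natrM.
  rewrite (_ : -2 - i%:Z = - (i.+2)%:Z); last by lia.
  by ring.
rewrite /binz prodN2 !mulrA -exprMn mulrNN mulr1 expr1n mul1r factS natrM mulfK //.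
by rewrite pnatr_eq0 -lt0n fact_gt0.
Qed.

Lemma big_ord_head (V : zmodType) (K : nat) (G : 'I_K.+1 -> V) :
  (forall i : 'I_K, G (lift ord0 i) = 0) -> \sum_i G i = G ord0.
Proof. by move=> G0; rewrite big_ord_recl big1 ?addr0. Qed.

Lemma big_ord_if_eq (V : zmodType) (K : nat) (j : int) (G : nat -> V) : (`|j| < K)%N ->
  \sum_(i < K) (if (i : nat)%:Z == j then G i else 0) = if 0 <= j then G `|j|%N else 0.
Proof.
move=> lt_j_K; case: ifP => j_ge0; last first.
  by rewrite big1 // => i _; case: eqP => // ij; move: j_ge0; rewrite -ij.
rewrite (bigD1 (Ordinal lt_j_K)) //= (_ : _ == j); last by apply/eqP; lia.
rewrite big1 ?addr0 // => i /eqP i_neq; case: eqP => // ij; case: i_neq.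
by apply: val_inj => /=; lia.
Qed.

Section ModuleModes.
Variables (F : fieldType) (A : VAdata F) (W : lmodType F).
Variables (YW : va_space A -> int -> W -> W) (hmod : is_module YW).
Local Notation Y := (@va_mode _ A).

Lemma mode_linear (f : va_space A) n : linear (YW f n).
Proof. by case: hmod => _ YWlin _ _ _ c x y; apply: YWlin. Qed.

Lemma mode_linear_l n (w : W) : linear (fun f => YW f n w).
Proof. by case: hmod => YWlin _ _ _ _ c x y; apply: YWlin. Qed.

Lemma mode_vac n (w : W) : YW (va_vac A) n w = if n == -1 then w else 0.
Proof. by case: hmod. Qed.

Lemma mode_borcherds (u v : va_space A) (w : W) (m n l : int) :
  exists N : nat, forall K : nat, (N <= K)%N ->
  \sum_(i < K) binz F m i *: YW (Y u (l + (i : nat)%:Z) v) (m + n - (i : nat)%:Z) w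
  = \sum_(i < K) ((-1) ^+ i * binz F l i) *:
      (YW u (m + l - (i : nat)%:Z) (YW v (n + (i : nat)%:Z) w)
       - ((-1) ^ l) *: YW v (n + l - (i : nat)%:Z) (YW u (m + (i : nat)%:Z) w)).
Proof. by case: hmod => _ _ _ _; apply. Qed.

Lemma mode_commute (u v : va_space A) m n (w : W) : (forall i : nat, Y u i%:Z v = 0) ->
  YW u m (YW v n w) = YW v n (YW u m w).
Proof.
move=> uv0; have [N borch] := mode_borcherds u v w m n 0.
have := borch N.+1 (leqnSn N).
rewrite big1 => [|i _]; last by rewrite add0r uv0 (lin0 (mode_linear_l _ _)) scaler0.
rewrite big_ord_head => [|i]; last by rewrite lift0 binz0S mulr0 scale0r.
rewrite binz_0 mulr1 expr0 expr0z !scale1r !addr0.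
by move/esym/eqP; rewrite subr_eq0 => /eqP.
Qed.

Lemma mode_assoc (u v : va_space A) n (w : W) : (forall k x, k != -1 -> YW u k x = 0) ->
  YW (Y u (-1) v) n w = YW u (-1) (YW v n w).
Proof.
move=> u_single; have [N borch] := mode_borcherds u v w 0 n (-1).
have := borch N.+1 (leqnSn N).
rewrite big_ord_head => [|i]; last by rewrite lift0 binz0S scale0r.
rewrite big_ord_head => [|i].
  rewrite !binz_0 mulr1 expr0 !scale1r ?addr0 ?add0r ?subr0.
  by rewrite (u_single 0) // (lin0 (mode_linear _ _)) scaler0 subr0.
rewrite lift0 !u_single; try by apply/eqP; lia.
by rewrite (lin0 (mode_linear _ _)) scaler0 subr0 scaler0.
Qed.

End ModuleModes.

Section ModuleDerivative.
Variables (F : numFieldType) (A : VAdata F) (W : lmodType F).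
Variables (YW : va_space A -> int -> W -> W) (hmod : is_module YW).
Local Notation Y := (@va_mode _ A).

(* u_(-2) 1 is the translate D u, so this is Y_W(D u, x) = d/dx Y_W(u, x). *)
Lemma mode_derivative (u : va_space A) n (w : W) :
  YW (Y u (-2) (va_vac A)) n w = - n%:~R *: YW u (n - 1) w.
Proof.
have [N borch] := mode_borcherds hmod u (va_vac A) w 0 n (-2).
have := borch (N + `|n|).+2 (leq_trans (leq_addr _ _) (leqW (leqnSn _))).
rewrite big_ord_head => [|i]; last by rewrite lift0 binz0S scale0r.
rewrite binz_0 scale1r addr0 add0r subr0 => ->.
have sign2 : (-1 : F) ^ (-2) = 1.
  by rewrite -invr_expz /exprz /= expr2 mulN1r opprK invr1.
pose G (i : nat) := i.+1%:R *: YW u (n - 1) w.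
transitivity (\sum_(i < (N + `|n|).+2)
    ((if (i : nat)%:Z == -1 - n then G i else 0) - if (i : nat)%:Z == n - 1 then G i else 0)).
  apply: eq_bigr => i _; rewrite /G signed_binzN2 sign2 scale1r !(mode_vac hmod).
  rewrite [X in if X then w else 0](_ : _ = ((i : nat)%:Z == -1 - n)); last first.
    by apply/eqP/eqP; lia.
  rewrite [X in if X then YW u _ w else 0](_ : _ = ((i : nat)%:Z == n - 1)); last first.
    by apply/eqP/eqP; lia.
  rewrite (fun_if (YW u _)) (lin0 (mode_linear hmod _ _)).
  case: eqP => [i1|_]; case: eqP => [i2|_]; first by exfalso; lia.
  - by rewrite !subr0 (_ : 0 - 2 - (i : nat)%:Z = n - 1) //; lia.
  - by rewrite !sub0r scalerN (_ : 0 + (i : nat)%:Z = n - 1) //; lia.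
  - by rewrite subrr scaler0.
rewrite sumrB !big_ord_if_eq /G; try lia.
case: ifP => n_neg; case: ifP => n_pos; first by exfalso; lia.
- by rewrite subr0 pmulrn (_ : ((`|(-1 - n)%R|.+1)%:Z) = - n) ?intrN //; lia.
- by rewrite sub0r -scaleNr pmulrn (_ : ((`|(n - 1)%R|.+1)%:Z) = n) ?intrN //; lia.
- by rewrite subrr (_ : n = 0) ?mulr0z ?oppr0 ?scale0r //; lia.
Qed.

Lemma vacuumlike_mode_eq0 (u : va_space A) : Y u (-2) (va_vac A) = 0 ->
  forall k (w : W), k != -1 -> YW u k w = 0.
Proof.
move=> Du0 k w k_neq; have := mode_derivative u (k + 1) w.
rewrite Du0 (lin0 (mode_linear_l hmod _ _)) addrK => /esym/eqP.
rewrite scaler_eq0 oppr_eq0 intr_eq0 => /orP[/eqP|/eqP //]; lia.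
Qed.

End ModuleDerivative.

Section IrreducibleModule.
Variables (F : fieldType) (A : VAdata F) (W : lmodType F).
Variables (YW : va_space A -> int -> W -> W) (hW : is_irreducible YW).

Lemma irreducible_dichotomy (S : W -> Prop) :
  is_submodule YW S -> (forall w, S w -> w = 0) \/ (forall w, S w).
Proof. by case: hW => _ [_]; apply. Qed.

Lemma countable_dim_irreducible : countable_dim (va_space A) -> countable_dim W.
Proof.
case=> eA eA_span; have [w0 w0_neq0] := hW.2.1.
pose word (s : seq (nat * int)) := foldr (fun j w => YW (eA j.1) j.2 w) w0 s.
pose eW i := if choice.unpickle i is Some s then word s else 0.
exists eW; have eW_word s : word s = eW (choice.pickle s) by rewrite /eW choice.pickleK.
case: (irreducible_dichotomy (S := in_cspan eW)) => [|span0|//].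
  split=> [|a x y|f n _ [k [c ->]]]; [exact: in_cspan0|exact: in_cspan_lin|].
  rewrite (lin_sum (mode_linear hW.1 _ _)); apply: in_cspan_sum => i.
  rewrite (linZ (mode_linear hW.1 _ _)); apply: in_cspanZ.
  rewrite /eW; case: choice.unpickle => [s|]; last first.
    by rewrite (lin0 (mode_linear hW.1 _ _)); exact: in_cspan0.
  have [kf [d ->]] := eA_span f; rewrite (lin_sum (mode_linear_l hW.1 _ _)).
  apply: in_cspan_sum => t; rewrite (linZ (mode_linear_l hW.1 _ _)); apply: in_cspanZ.
  by rewrite -[YW _ _ _]/(word ((t : nat, n) :: s)) eW_word; exact: in_cspan_gen.
by case: w0_neq0; apply: span0; rewrite -[w0]/(word [::]) eW_word; exact: in_cspan_gen.
Qed.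

Lemma commuting_endo_dichotomy (D : W -> W) : linear D ->
  (forall f n w, D (YW f n w) = YW f n (D w)) -> (forall w, D w = 0) \/ bijective D.
Proof.
move=> Dlin Dcomm.
have [|D_inj|ker_all] := irreducible_dichotomy (S := fun w => D w = 0); last by left.
  split=> [|a x y Dx Dy|f n w Dw]; first exact: lin0 Dlin.
    by rewrite Dlin Dx Dy scaler0 addr0.
  by rewrite Dcomm Dw (lin0 (mode_linear hW.1 _ _)).
have [|img0|img_all] := irreducible_dichotomy (S := fun w => exists x, w = D x).
- split=> [|a _ _ [x ->] [y ->]|f n _ [x ->]]; first by exists 0; rewrite (lin0 Dlin).
    by exists (a *: x + y); rewrite Dlin.
  by exists (YW f n x); rewrite Dcomm.
- by left=> w; apply: img0; exists w.
right; have /choice[g gK] := img_all; exists g => [x|y]; last by rewrite -gK.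
by apply/eqP; rewrite -subr_eq0; apply/eqP/D_inj; rewrite (linB Dlin) -gK subrr.
Qed.

End IrreducibleModule.

Lemma linear_subr_scale (F : fieldType) (W : lmodType F) (B : W -> W) (c : F) :
  linear B -> linear (fun w => B w - c *: w).
Proof.
move=> Blin a x y; rewrite Blin scalerDr scalerBr !scalerA [c * a]mulrC.
by rewrite addrACA opprD.
Qed.

Lemma commuting_endo_scalar (F : closedFieldType) (A : VAdata F) (W : lmodType F)
    (YW : va_space A -> int -> W -> W) (B : W -> W) :
  ~ countable [set: F]%classic -> is_irreducible YW -> countable_dim W -> linear B ->
  (forall f n w, B (YW f n w) = YW f n (B w)) -> exists c, forall w, B w = c *: w.
Proof.
move=> Func hW Wcount Blin Bcomm; apply: dixmier => // c.
have [|Bc0|] := commuting_endo_dichotomy hW (linear_subr_scale c Blin); [|left|by right].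
  move=> f n w; rewrite Bcomm (linB (mode_linear hW.1 _ _)).
  by rewrite (linZ (mode_linear hW.1 _ _)).
by move=> w; apply/eqP; rewrite -subr_eq0; apply/eqP/Bc0.
Qed.

Section MonomialCharacter.
Variables (F : fieldType) (r : nat) (phi : 'rV[int]_r -> F).
Hypotheses (phiD : {morph phi : x y / x + y >-> x * y}) (phi0 : phi 0 = 1).

Lemma morph_neq0 x : phi x != 0.
Proof.
apply: contraTneq isT => phix0; have := phiD x (- x).
by rewrite addrN phi0 phix0 mul0r => /eqP; rewrite oner_eq0.
Qed.

Lemma morph_monoz m : phi m = monoz (\row_i phi (delta_mx 0 i)) m.
Proof.
have phiMn x n : phi (x *+ n) = phi x ^+ n.
  by elim: n => [|n IHn]; rewrite ?mulr0n ?expr0 // mulrS phiD IHn exprS.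
have phiN x : phi (- x) = (phi x)^-1.
  by apply: (mulfI (morph_neq0 x)); rewrite -phiD addrN phi0 divff ?morph_neq0.
have phiZ x (z : int) : phi (x *~ z) = phi x ^ z.
  by case: z => n; rewrite ?NegzE ?mulrNz ?phiN -?invr_expz /= phiMn.
rewrite /monoz {1}[m]matrix_sum_delta big_ord1 (big_morph phi phiD phi0).
apply: eq_bigr => i _; rewrite mxE -phiZ; congr phi.
by apply/matrixP => a b; rewrite !mxE -scaler_int !mxE intz mulrC.
Qed.

End MonomialCharacter.

Lemma tensU_linear (F : fieldType) (M : choiceType) (V : lmodType F) (k : M) :
  linear (fun v : V => (<< v *g k >> : tensL M V)).
Proof.
move=> c x y; rewrite monalgUD; congr (_ + _).
by apply/malgP => k'; rewrite tscaleE !mcoeffU; case: (k == k'); rewrite ?scaler0.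
Qed.

Lemma countable_dim_tensL (F : fieldType) (M : countType) (V : lmodType F) :
  countable_dim V -> countable_dim (tensL M V).
Proof.
case=> e e_span.
pose e' p : tensL M V := if choice.unpickle p is Some (i, k) then << e i *g k >> else 0.
exists e' => f; change (in_cspan e' f).
rewrite [f]monalgE; apply: in_cspan_sum => k; have [n [c ->]] := e_span f@_k.
rewrite (lin_sum (tensU_linear k)); apply: in_cspan_sum => i.
rewrite (linZ (tensU_linear k)); apply: in_cspanZ.
have -> : << e i *g k >> = e' (choice.pickle (i : nat, k)) by rewrite /e' choice.pickleK.
exact: in_cspan_gen.
Qed.

Section LaurentTensor.
Variables (F : numFieldType) (A : VAdata F) (hA : is_module (@va_mode _ A)) (r : nat).
Local Notation Y := (@va_mode _ A).
Local Notation L := (va_space (LrV r A)).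
Local Notation YL := (@Lr_mode _ r A).

Definition tpow (m : 'rV[int]_r) : L := << va_vac A *g m >>.

Lemma Lr_modeU (u : va_space A) m n (g : L) :
  YL << u *g m >> n g = \sum_(k <- msupp g) << Y u n g@_k *g m + k >>.
Proof.
rewrite /Lr_mode msuppU; case: eqP => [->|_]; last by rewrite big_seq_fset1 mcoeffUU.
by rewrite big_nil big1 // => k _; rewrite (lin0 (mode_linear_l hA _ _)) monalgU0.
Qed.

Lemma Lr_modeUU (u v : va_space A) m k n :
  YL << u *g m >> n << v *g k >> = << Y u n v *g m + k >>.
Proof.
rewrite Lr_modeU msuppU; case: eqP => [->|_]; last by rewrite big_seq_fset1 mcoeffUU.
by rewrite big_nil (lin0 (mode_linear hA _ _)) monalgU0.
Qed.

Lemma tpow_mode_eq0 m n (g : L) : n != -1 -> YL (tpow m) n g = 0.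
Proof.
by move=> n_neq; rewrite Lr_modeU big1 // => k _; rewrite (mode_vac hA) (negbTE n_neq) monalgU0.
Qed.

Lemma tpow_modeU m (v : va_space A) k : YL (tpow m) (-1) << v *g k >> = << v *g m + k >>.
Proof. by rewrite Lr_modeUU (mode_vac hA) eqxx. Qed.

Variables (W : lmodType F) (YW : L -> int -> W -> W) (hW : is_module YW).

Lemma tpow_single m k w : k != -1 -> YW (tpow m) k w = 0.
Proof. exact: (vacuumlike_mode_eq0 hW (tpow_mode_eq0 m _ _)). Qed.

Lemma tpow_commute m f n w : YW (tpow m) (-1) (YW f n w) = YW f n (YW (tpow m) (-1) w).
Proof. by apply: (mode_commute hW) => i; apply: tpow_mode_eq0. Qed.

Lemma tpow_assoc m f n w : YW (YL (tpow m) (-1) f) n w = YW (tpow m) (-1) (YW f n w).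
Proof. by apply: (mode_assoc hW); apply: tpow_single. Qed.

Lemma tpowD m k w : YW (tpow (m + k)) (-1) w = YW (tpow m) (-1) (YW (tpow k) (-1) w).
Proof. by rewrite -tpow_assoc tpow_modeU. Qed.

Lemma tpow0 w : YW (tpow 0) (-1) w = w.
Proof. by rewrite (mode_vac hW). Qed.

Lemma mode_tpowU v k n w : YW << v *g k >> n w = YW (tpow k) (-1) (YW << v *g 0 >> n w).
Proof. by rewrite -tpow_assoc tpow_modeU addr0. Qed.

Definition restrictV (v : va_space A) : int -> W -> W := YW << v *g 0 >>.

Lemma restrictV_module : is_module restrictV.
Proof.
case: hW => YWlinl YWlin YWtrunc YWvac YWborch; split=> //.
- by move=> c u v n w; rewrite /restrictV (tensU_linear 0 c u v) YWlinl.
- by move=> u n c w w'; apply: YWlin.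
- by move=> u w; apply: YWtrunc.
move=> u v w m n l; have [N borch] := YWborch << u *g 0 >> << v *g 0 >> w m n l.
by exists N => K le_N_K; rewrite -borch //; apply: eq_bigr => i _; rewrite /= Lr_modeUU addr0.
Qed.

Section ScalarTranslations.
Variable a : 'rV[F]_r.
Hypothesis tpow_scalar : forall m w, YW (tpow m) (-1) w = monoz a m *: w.

Lemma mode_Ua f n w : YW f n w = Ua_mode restrictV a f n w.
Proof.
rewrite /Ua_mode {1}[f]monalgE (lin_sum (mode_linear_l hW _ _)).
by apply: eq_bigr => k _; rewrite mode_tpowU tpow_scalar.
Qed.

Lemma restrictV_irreducible : is_irreducible YW -> is_irreducible restrictV.
Proof.
case=> _ [W_nz YW_irr]; split; [exact: restrictV_module | split=> // S [S0 Slin Smode]].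
apply: YW_irr; split=> // f n w Sw; rewrite mode_Ua /Ua_mode.
apply: big_ind => [//|x y Sx Sy|k _]; first by rewrite -[x]scale1r; apply: Slin.
by rewrite -[_ *: _]addr0; apply: Slin => //; apply: Smode.
Qed.

End ScalarTranslations.

End LaurentTensor.

Lemma tpow_scalar (A : VAdata CC) (r : nat) (W : lmodType CC)
    (YW : va_space (LrV r A) -> int -> W -> W) :
  is_module (@va_mode _ A) -> countable_dim (va_space A) -> is_irreducible YW ->
  exists2 a : 'rV[CC]_r, (forall i, a 0 i != 0) &
    forall m w, YW (tpow A m) (-1) w = monoz a m *: w.
Proof.
move=> hA Vcount hW; have [hWmod [[w0 w0_neq0] _]] := hW.
have Wcount := countable_dim_irreducible hW (countable_dim_tensL _ Vcount).
have /choice[c def_c] m : exists c, forall w, YW (tpow A m) (-1) w = c *: w.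
  apply: (commuting_endo_scalar CC_not_countable hW Wcount (mode_linear hWmod _ _)).
  exact: tpow_commute.
have scale_w0I x y : x *: w0 = y *: w0 -> x = y.
  move/eqP; rewrite -subr_eq0 -scalerBl scaler_eq0 subr_eq0 orbC.
  by rewrite (negPf (introN eqP w0_neq0)) => /eqP.
have cD : {morph c : x y / x + y >-> x * y}.
  by move=> x y; apply: scale_w0I; rewrite -def_c (tpowD hA hWmod) !def_c scalerA.
have c0 : c 0 = 1 by apply: scale_w0I; rewrite -def_c (tpow0 hWmod) scale1r.
exists (\row_i c (delta_mx 0 i)) => [i|m w]; first by rewrite mxE morph_neq0.
by rewrite def_c -morph_monoz.
Qed.

Theorem proposition3p12
  (V : lmodType CC) (Y : V -> int -> V -> V) (vac : V) (r : nat)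
  (hVA : is_vertex_algebra {| va_space := V; va_mode := Y; va_vac := vac |})
  (hcount : countable_dim V)
  (W : lmodType CC)
  (YW : va_space (LrV r {| va_space := V; va_mode := Y; va_vac := vac |}) ->
        int -> W -> W)
  (hW : is_irreducible YW) :
  exists (U : lmodType CC) (YU : V -> int -> U -> U) (a : 'rV[CC]_r),
    [/\ is_irreducible (A := {| va_space := V; va_mode := Y; va_vac := vac |}) YU,
        (forall i, a 0 i != 0) &
        module_iso YW
          (Ua_mode (A := {| va_space := V; va_mode := Y; va_vac := vac |}) YU a)].
Proof.
have [hA _] := hVA.
have [a a_neq0 Ta] := tpow_scalar hA hcount hW.
exists W, (restrictV YW), a; split=> //.
  exact (restrictV_irreducible hA hW.1 Ta hW).
exists id; split=> //; first by exists id.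
move=> f n w; exact (mode_Ua hA hW.1 Ta f n w).
Qed.
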